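(* Let $M=(m_0,m_1,m_2,\ldots)$ be a (possibly finite) sequence of integers with $m_0=1$ and $m_j\ge 2$ for all $j\ge 1$. Then for all positive integers $n$ and $r$ (with $r$ at most the largest index of $M$ if $M$ is finite) we have $$p_M(m_1m_2\cdots m_r\,n-1)\equiv 0 \pmod{\prod_{t=2}^{r}\mathcal{M}(m_t,t-1)}.$$
   Context: For $r\ge 0$ put $M_r:=m_0m_1\cdots m_r$. An $M$-ary partition of a positive integer $N$ is a representation $N=M_{r_1}+M_{r_2}+\cdots+M_{r_s}$ with nonnegative integers $r_1,\ldots,r_s$, where the order of the summands is disregarded (i.e. a partition of $N$ all of whose parts are of the form $M_r$). $p_M(N)$ denotes the number of $M$-ary partitions of $N$. For positive integers $m,r$ define $\mathcal{M}(m,r):=\dfrac{m}{\gcd\big(m,\operatorname{lcm}(1,2,\ldots,r)\big)}$. An empty product (the case $r=1$) equals $1$. *)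

From mathcomp Require Import all_boot.
Set Implicit Arguments. Unset Strict Implicit. Unset Printing Implicit Defensive.

(* The sequence M = (m_0, m_1, ...) is given by m : nat -> nat together with
   K : option nat : K = None means M is infinite, K = Some k means M is the
   finite sequence (m_0, ..., m_k) (k = largest index). *)
Definition valid_idx (K : option nat) (r : nat) : bool :=
  if K is Some k then r <= k else true.

Definition Mprod (m : nat -> nat) (r : nat) : nat := \prod_(0 <= j < r.+1) m j.

(* Since m_0 = 1 and
   m_j >= 2, M_r >= 2^r > r, so any such r satisfies r < v.+1; the bound only
   makes the existential a finite (boolean) search. *)
Definition is_Mpart (m : nat -> nat) (K : option nat) (v : nat) : bool :=
  [exists r : 'I_v.+1, valid_idx K r && (Mprod m r == v)].

(* A partition of N is encoded by its multiplicity function c : value -> mult.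
   Every part of a partition of N is <= N and every multiplicity is <= N, so
   c : {ffun 'I_N.+1 -> 'I_N.+1} loses nothing. *)
Definition Mary_partition (m : nat -> nat) (K : option nat) (N : nat)
    (c : {ffun 'I_N.+1 -> 'I_N.+1}) : bool :=
  [forall v : 'I_N.+1, (0 < c v) ==> ((0 < (v : nat)) && is_Mpart m K v)]
  && (\sum_(v : 'I_N.+1) (v : nat) * c v == N).

Definition pM (m : nat -> nat) (K : option nat) (N : nat) : nat :=
  #|[pred c : {ffun 'I_N.+1 -> 'I_N.+1} | Mary_partition m K c]|.

Definition lcm_upto (r : nat) : nat := \big[lcmn/1]_(1 <= i < r.+1) i.

Definition calM (mm r : nat) : nat := mm %/ gcdn mm (lcm_upto r).

From mathcomp Require Import all_boot all_algebra zify.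
Import GRing.Theory Num.Theory.
Set Implicit Arguments. Unset Strict Implicit. Unset Printing Implicit Defensive.

(* Remove from an M-ary partition of M_r n - 1 its parts divisible by M_r:
   what is left is a partition of some M_r y - 1 into the parts
   M_0, ..., M_(r-1).  Sorting the latter by the multiplicity of the largest
   part, their number G_(r-1)(y) satisfies G_0 = 1 and
   G_s(y) = sum_(u < m_(s+1) y) G_(s-1)(u+1).  By induction on s,
   G_s = (prod_(t=2)^(s+1) calM(m_t, t-1)) * H_s with H_s an integer-valued
   polynomial of degree at most s: a block sum sum_(i < c) H(c q + i + 1) of a
   polynomial of degree at most s - 1 is, by Newton's interpolation formula,
   an integer combination of binomials C(c, k), 1 <= k <= s, each divisible
   by calM(c, s), and the quotient is again a polynomial of degree at most
   s - 1 in q, so summing over q raises the degree by one. *)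

Lemma dvdn_lcm_upto i k : 0 < i <= k -> i %| lcm_upto k.
Proof.
by move=> ik; rewrite /lcm_upto (big_rem i) ?dvdn_lcml // mem_index_iota ltnS.
Qed.

Lemma lcm_upto_gt0 k : 0 < lcm_upto k.
Proof.
rewrite /lcm_upto big_seq; elim/big_ind: _ => // [a b a0 b0|i].
  by rewrite lcmn_gt0 a0.
by rewrite mem_index_iota => /andP[].
Qed.

Lemma calM_gt0 c k : 0 < c -> 0 < calM c k.
Proof.
move=> c0; rewrite /calM divn_gt0 ?gcdn_gt0 ?c0 //.
by apply: dvdn_leq => //; apply: dvdn_gcdl.
Qed.

Lemma calM_dvd_bin c k i : 0 < i <= k -> calM c k %| 'C(c, i).
Proof.
move=> ik; rewrite /calM; set g := gcdn c (lcm_upto k).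
have g0 : 0 < g by rewrite gcdn_gt0 lcm_upto_gt0 orbT.
have c_iC : c %| i * 'C(c, i).
  by case: i ik => // i _; rewrite -mul_bin_diag dvdn_mulr.
have c_gC : c %| g * 'C(c, i).
  rewrite /g muln_gcdl dvdn_gcd dvdn_mulr //=.
  by apply: dvdn_trans c_iC _; rewrite dvdn_mul // dvdn_lcm_upto.
by rewrite -(dvdn_pmul2l g0) mulnC divnK // dvdn_gcdl.
Qed.

Section FiniteDifferences.
Local Open Scope ring_scope.

Definition fdiff (f : nat -> int) : nat -> int := fun x => f x.+1 - f x.

(* [polyfun d f]: the [d]-th forward difference of [f] is constant, i.e. [f]
   is a polynomial function of degree at most [d]. *)
Fixpoint polyfun (d : nat) (f : nat -> int) : Prop :=
  if d is d'.+1 then polyfun d' (fdiff f) else forall x, f x.+1 = f x.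

Lemma eq_polyfun d f g : f =1 g -> polyfun d f -> polyfun d g.
Proof.
elim: d f g => [|d IH] f g fg /=; first by move=> hf x; rewrite -!fg.
by apply: IH => x; rewrite /fdiff !fg.
Qed.

Lemma polyfun_cst d (c : int) : polyfun d (fun=> c).
Proof.
elim: d c => [|d IH] c //=.
by apply: (@eq_polyfun _ (fun=> 0)) (IH 0) => x; rewrite /fdiff subrr.
Qed.

Lemma polyfunD d f g :
  polyfun d f -> polyfun d g -> polyfun d (fun x => f x + g x).
Proof.
elim: d f g => [|d IH] f g /=; first by move=> hf hg x; rewrite hf hg.
move=> hf hg; apply: (@eq_polyfun _ (fun x => fdiff f x + fdiff g x)).
  by move=> x; rewrite /fdiff opprD addrACA.
exact: IH.
Qed.

Lemma polyfun_sum d n (F : nat -> nat -> int) :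
  (forall i, polyfun d (F i)) -> polyfun d (fun x => \sum_(i < n) F i x).
Proof.
move=> hF; elim: n => [|n IH].
  by apply: (@eq_polyfun _ (fun=> 0)) (polyfun_cst _ _) => x; rewrite big_ord0.
apply: (@eq_polyfun _ (fun x => \sum_(i < n) F i x + F n x)).
  by move=> x; rewrite big_ord_recr.
exact: polyfunD.
Qed.

Lemma polyfun0_cst f : polyfun 0 f -> forall x, f x = f 0%N.
Proof. by move=> hf; elim=> [|x IH] //; rewrite hf. Qed.

Lemma fdiff_telescope (f : nat -> int) a k :
  f (a + k)%N - f a = \sum_(i < k) fdiff f (a + i)%N.
Proof.
elim: k => [|k IH]; first by rewrite big_ord0 addn0 subrr.
by rewrite big_ord_recr /= -IH /fdiff addnS addrC addrA subrK.
Qed.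

Lemma polyfun_affine d f c s :
  polyfun d f -> polyfun d (fun y => f (c * y + s)%N).
Proof.
elim: d f s => [|d IH] f s /= hf.
  by move=> y; rewrite (polyfun0_cst hf (c * y.+1 + s)) (polyfun0_cst hf (c * y + s)).
apply: (@eq_polyfun _ (fun y => \sum_(i < c) fdiff f (c * y + (s + i))%N)).
  move=> y; rewrite /fdiff; under eq_bigr do rewrite addnA.
  by rewrite -fdiff_telescope mulnS; congr (f _ - _); lia.
by apply: (@polyfun_sum d c (fun i y => fdiff f (c * y + (s + i)))) => i; apply: IH.
Qed.

Lemma polyfun_psum d f : polyfun d f -> polyfun d.+1 (fun y => \sum_(u < y) f u).
Proof.
move=> hf /=; apply: eq_polyfun hf => y.
by rewrite /fdiff big_ord_recr /= addrAC subrr add0r.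
Qed.

Lemma polyfun_divl d f g (c : int) : c != 0 -> (forall x, f x = c * g x) ->
  polyfun d f -> polyfun d g.
Proof.
elim: d f g => [|d IH] f g c0 fg /= hf.
  by move=> x; apply: (mulfI c0); rewrite -!fg hf.
by apply: (IH (fdiff f)) => // x; rewrite /fdiff !fg mulrBr.
Qed.

Lemma sum_bin_ord x k : (\sum_(i < x) 'C(i, k) = 'C(x, k.+1))%N.
Proof.
elim: x => [|x IH]; first by rewrite big_ord0 bin0n.
by rewrite big_ord_recr /= IH binS addnC.
Qed.

Lemma polyfun_newton d f : polyfun d f -> forall a x,
  f (a + x)%N = \sum_(k < d.+1) iter k fdiff f a * 'C(x, k)%:R.
Proof.
elim: d f => [|d IH] f hf a x.
  by rewrite big_ord1 /= (polyfun0_cst hf (a + x)) (polyfun0_cst hf a) bin0 mulr1.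
rewrite -[f (a + x)%N](subrK (f a)) fdiff_telescope.
under eq_bigr => i _ do rewrite (IH _ hf a i).
rewrite exchange_big /=.
under eq_bigr => k _ do rewrite -mulr_sumr -natr_sum sum_bin_ord.
rewrite [RHS]big_ord_recl addrC bin0 mulr1; congr (_ + _).
by apply: eq_bigr => k _; rewrite -iterSr.
Qed.

Lemma calM_dvd_sum_polyfun d f c a : polyfun d f ->
  ((calM c d.+1)%:R %| \sum_(s < c) f (a + s)%N)%Z.
Proof.
move=> hf; under eq_bigr => s _ do rewrite (polyfun_newton hf a s).
rewrite exchange_big /=; apply: rpred_sum => k _.
rewrite -mulr_sumr -natr_sum sum_bin_ord dvdz_mull //.
by rewrite dvdzE !natz calM_dvd_bin // ltn_ord.
Qed.

End FiniteDifferences.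

Lemma sum_ord_mul (R : nmodType) (F : nat -> R) c y :
  (\sum_(u < c * y) F u = \sum_(q < y) \sum_(i < c) F (c * q + i)%N)%R.
Proof.
elim: y => [|y IH]; first by rewrite muln0 !big_ord0.
by rewrite mulnSr big_split_ord IH big_ord_recr.
Qed.

(* The number of partitions of [M_(s+1) y - 1] into the parts [M_0, ..., M_s],
   see [npart_small_part]. *)
Fixpoint pM_small (m : nat -> nat) (s y : nat) : nat :=
  if s is s'.+1 then \sum_(u < m s.+1 * y) pM_small m s' u.+1 else 1.

Definition calM_prod (m : nat -> nat) (s : nat) : nat :=
  \prod_(2 <= t < s.+2) calM (m t) t.-1.

Section CountFactorization.
Local Open Scope ring_scope.

Lemma pM_small_polyfun m s : (forall t, (2 <= t <= s.+1)%N -> (0 < m t)%N) ->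
  exists2 H, polyfun s H & forall y, (pM_small m s y)%:R = (calM_prod m s)%:R * H y.
Proof.
elim: s => [|s IH] m_gt0.
  by exists (fun=> 1); [exact: polyfun_cst | move=> y; rewrite /calM_prod big_geq].
have [t /andP[t2 ts]|H pH eH] := IH; first by apply: m_gt0; rewrite t2 ltnW.
set c := m s.+2; set C := calM c s.+1.
have C_gt0 : (0 < C)%N by apply/calM_gt0/m_gt0; rewrite leqnn andbT.
pose V q := \sum_(i < c) H (c * q + i).+1.
have pV : polyfun s V.
  apply: (@polyfun_sum s c (fun i q => H (c * q + i).+1)) => i.
  by apply: eq_polyfun (polyfun_affine c i.+1 pH) => q; rewrite addnS.
pose W q := (V q %/ C%:R)%Z.
have eV q : V q = C%:R * W q.
  rewrite mulrC divzK // /V; under eq_bigr do rewrite -addSn.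
  exact: calM_dvd_sum_polyfun.
have pW : polyfun s W by apply: polyfun_divl eV pV; rewrite pnatr_eq0 -lt0n.
exists (fun y => \sum_(q < y) W q); first exact: polyfun_psum.
move=> y /=; rewrite natr_sum.
under eq_bigr => u _ do rewrite eH.
rewrite -mulr_sumr (sum_ord_mul (fun u => H u.+1)) -/c.
rewrite (eq_bigr (fun q : 'I_y => C%:R * W q)) => [|q _]; last exact: eV.
by rewrite -mulr_sumr mulrA -natrM /calM_prod [in RHS]big_nat_recr.
Qed.

Lemma calM_prod_dvd_pM_small m s y :
  (forall t, (2 <= t <= s.+1)%N -> (0 < m t)%N) -> (calM_prod m s %| pM_small m s y)%N.
Proof.
move=> m_gt0; have [H _ eH] := pM_small_polyfun m_gt0.
have : ((calM_prod m s)%:R %| (pM_small m s y)%:R)%Z by rewrite eH dvdz_mulr.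
by rewrite dvdzE !natz.
Qed.

End CountFactorization.

Lemma sum_nat_eq n X : \sum_(0 <= a < n) (a == X) = (X < n).
Proof.
elim: n => [|n IH]; first by rewrite big_geq.
by rewrite big_nat_recr //= IH ltnS; case: ltngtP.
Qed.

Section Partitions.
Variable N : nat.
Implicit Types (P Q : pred nat) (c : {ffun 'I_N.+1 -> 'I_N.+1}) (p v : 'I_N.+1).

Definition wt c : nat := \sum_(v : 'I_N.+1) v * c v.

Definition parts_on P X :=
  [pred c : {ffun 'I_N.+1 -> 'I_N.+1} |
    [forall v : 'I_N.+1, (0 < c v) ==> P v] && (wt c == X)].

Definition npart P X : nat := #|parts_on P X|.

Lemma eq_npart P Q X : (forall v, P v = Q v) -> npart P X = npart Q X.
Proof.
move=> PQ; apply: eq_card => c; rewrite !inE.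
by congr andb; apply: eq_forallb => v; rewrite PQ.
Qed.

Lemma npart_pred0 X : npart pred0 X = (X == 0).
Proof.
pose c0 := [ffun=> ord0] : {ffun 'I_N.+1 -> 'I_N.+1}.
have wt_c0 : wt c0 = 0 by rewrite /wt big1 // => v _; rewrite ffunE muln0.
rewrite /npart (eq_card (B := [pred c | (c == c0) && (X == 0)])); last first.
  move=> c; rewrite !inE.
  apply/andP/andP => [[/forallP c_0 /eqP <-]|[/eqP -> /eqP ->]].
    suff -> : c = c0 by rewrite wt_c0.
    apply/ffunP => v; apply/val_inj; move: (c_0 v).
    by rewrite ffunE; case: (c v) => -[].
  by split; [apply/forallP => v; rewrite ffunE | rewrite wt_c0].
case: eqP => _; last by rewrite eq_card0 // => c; rewrite !inE andbF.
by rewrite (eq_card (B := pred1 c0)) ?card1 // => c; rewrite !inE.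
Qed.

Definition set_mult p (a : 'I_N.+1) c := [ffun v => if v == p then a else c v].

Lemma wt_sep c p : wt c = p * c p + \sum_(v | v != p) v * c v.
Proof. by rewrite /wt (bigD1 p). Qed.

Lemma wt_set_mult c p a : wt (set_mult p a c) = p * a + \sum_(v | v != p) v * c v.
Proof.
rewrite (wt_sep _ p) ffunE eqxx; congr (_ + _).
by apply: eq_bigr => v /negbTE vp; rewrite ffunE vp.
Qed.

Lemma npart_fiber P p (a : 'I_N.+1) X : P p -> a * p <= X ->
  #|[pred c in parts_on P X | c p == a]| = npart (fun x => P x && (x != p)) (X - a * p).
Proof.
move=> Pp apX; set P' := fun x => P x && (x != p).
have c'p0 c : c \in parts_on P' (X - a * p) -> c p = ord0.
  case/andP=> /forallP/(_ p); rewrite /P' eqxx andbF implybF lt0n negbK => /eqP cp _.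
  exact: val_inj.
have inj_set : {in parts_on P' (X - a * p) &, injective (set_mult p a)}.
  move=> c1 c2 /c'p0 c1p /c'p0 c2p /ffunP e; apply/ffunP => v.
  by move: (e v); rewrite !ffunE; case: eqP => [->|]; rewrite ?c1p ?c2p.
rewrite /npart -(card_in_imset inj_set); apply: eq_card => c; rewrite inE.
apply/andP/imsetP => [[/andP[/forallP cP /eqP wc] /eqP cp]|[c' c'P ->]].
  exists (set_mult p ord0 c).
    rewrite inE wt_set_mult muln0 add0n; apply/andP; split.
      apply/forallP => v; rewrite ffunE /P' val_eqE.
      by case: eqVneq => //= _; rewrite andbT.
    by rewrite -wc (wt_sep c p) cp mulnC addKn.
  by apply/ffunP => v; rewrite !ffunE; case: eqP => [->|].
move: (c'P) => /andP[/forallP c'P' /eqP wc']; split; last by rewrite ffunE eqxx.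
rewrite inE wt_set_mult; apply/andP; split.
  apply/forallP => v; rewrite ffunE.
  case: eqVneq => [->|vp]; first by rewrite Pp implybT.
  by move: (c'P' v); rewrite /P' val_eqE vp andbT.
have := wt_sep c' p; rewrite c'p0 // muln0 add0n => <-.
by rewrite wc' mulnC subnKC.
Qed.

Lemma npart_fiber0 P p (a : 'I_N.+1) X : X < a * p ->
  #|[pred c in parts_on P X | c p == a]| = 0.
Proof.
move=> Xap; apply: eq_card0 => c; rewrite !inE.
apply/negP => /andP[/andP[_ /eqP wc] /eqP cp]; move: Xap.
by rewrite -wc (wt_sep c p) cp mulnC ltnNge leq_addr.
Qed.

Lemma npart_split P p X : P p ->
  npart P X =
  \sum_(0 <= a < N.+1 | a * p <= X) npart (fun x => P x && (x != p)) (X - a * p).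
Proof.
move=> Pp; rewrite /npart -sum1_card (partition_big (fun c => c p) xpredT) //=.
rewrite big_mkord [RHS]big_mkcond; apply: eq_bigr => a _.
rewrite sum1_card; case: leqP => [apX|Xap]; first exact: npart_fiber.
exact: npart_fiber0.
Qed.

Lemma npart_ones X : 0 < N -> npart (pred1 1) X = (X < N.+1).
Proof.
move=> N_gt0; rewrite (@npart_split _ (Ordinal (N_gt0 : 1 < N.+1))) //=.
have none Y : npart (fun x => (x == 1) && (x != 1)) Y = (Y == 0).
  by rewrite -npart_pred0; apply: eq_npart => v; case: eqP.
under eq_bigr do rewrite none muln1 subn_eq0.
rewrite -(sum_nat_eq _ X) big_mkcond /=; apply: eq_bigr => a _.
by rewrite muln1 eqn_leq; case: (a <= X).
Qed.

Section Multiples.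
Variables (S : pred nat) (Q D : nat).
Hypothesis Q_gt0 : 0 < Q.
Hypothesis dvd_S : forall y, 0 < y -> Q * y <= N.+1 -> D %| npart S (Q * y - 1).

Lemma npart_dvd_multiples_of P :
  (forall v, S v -> P v) -> (forall v, P v -> ~~ S v -> (0 < v) && (Q %| v)) ->
  forall y, 0 < y -> Q * y <= N.+1 -> D %| npart P (Q * y - 1).
Proof.
move: {2}#|_| (leqnn #|[pred v : 'I_N.+1 | P v && ~~ S v]|) => k.
elim: k P => [|k IH] P hk SP PS y y_gt0 Qy.
  rewrite (@eq_npart _ S) ?dvd_S // => v.
  apply/idP/idP => [Pv|/SP //]; apply: contraTT hk => Sv.
  by rewrite -ltnNge (cardD1 v) inE Pv Sv.
have [p /andP[Pp Sp]|none] := pickP [pred v : 'I_N.+1 | P v && ~~ S v]; last first.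
  rewrite (@eq_npart _ S) ?dvd_S // => v.
  apply/idP/idP => [Pv|/SP //].
  by move: (none v); rewrite inE Pv /=; case: (S v).
rewrite (npart_split _ Pp); apply: dvdn_sum => a apy.
have /andP[p_gt0 /dvdnP[b pE]] := PS p Pp Sp.
have aby : a * b < y by move: apy; rewrite pE; nia.
rewrite (_ : Q * y - 1 - a * p = Q * (y - a * b) - 1); last by rewrite pE mulnBr; nia.
apply: IH; rewrite ?subn_gt0 //.
- move: hk; rewrite (cardD1 p) inE Pp Sp ltnS; apply: leq_trans.
  by apply: subset_leq_card; apply/subsetP => v; rewrite !inE; case: (P v); case: (S v).
- by move=> v Sv; rewrite SP //=; apply: contraNneq Sp => <-.
- by move=> v /andP[Pv _]; apply: PS.
- by apply: leq_trans Qy; rewrite leq_pmul2l ?leq_subr.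
Qed.

End Multiples.

End Partitions.

Lemma MprodS m t : Mprod m t.+1 = Mprod m t * m t.+1.
Proof. by rewrite /Mprod big_nat_recr. Qed.

Lemma Mprod_dvd m i j : i <= j -> Mprod m i %| Mprod m j.
Proof.
elim: j => [|j IH]; first by rewrite leqn0 => /eqP ->.
by rewrite leq_eqVlt ltnS => /predU1P[-> //|/IH ij]; rewrite MprodS dvdn_mulr.
Qed.

Lemma prod_Mprod m r : m 0 = 1 -> \prod_(1 <= j < r.+1) m j = Mprod m r.
Proof. by move=> m0; rewrite /Mprod [RHS]big_ltn // m0 mul1n. Qed.

Lemma valid_idx_le K i j : i <= j -> valid_idx K j -> valid_idx K i.
Proof. by case: K => //= k ij /(leq_trans ij). Qed.

Section SmallParts.
Variables (m : nat -> nat) (r : nat).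
Hypothesis m0 : m 0 = 1.
Hypothesis m_ge2 : forall j, 0 < j <= r -> 1 < m j.

Lemma Mprod0 : Mprod m 0 = 1.
Proof. by rewrite /Mprod big_nat1. Qed.

Lemma Mprod_gt0 i : i <= r -> 0 < Mprod m i.
Proof.
elim: i => [|i IH] ir; first by rewrite Mprod0.
by rewrite MprodS muln_gt0 IH ?(ltnW ir) // ltnW // m_ge2.
Qed.

Lemma ltn_MprodS i : i < r -> Mprod m i < Mprod m i.+1.
Proof.
move=> ir; have := @m_ge2 i.+1 ir; have := Mprod_gt0 (ltnW ir).
by rewrite MprodS; nia.
Qed.

Lemma ltn_Mprod i j : i < j <= r -> Mprod m i < Mprod m j.
Proof.
elim: j => [|j IH] /andP[ij jr] //; apply: leq_ltn_trans (ltn_MprodS jr).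
move: ij; rewrite ltnS leq_eqVlt => /predU1P[-> //|ij].
by apply/ltnW/IH; rewrite ij ltnW.
Qed.

Lemma ltn_idx_Mprod i : i <= r -> i < Mprod m i.
Proof.
elim: i => [|i IH] ir; first by rewrite Mprod0.
exact: leq_ltn_trans (IH (ltnW ir)) (ltn_MprodS ir).
Qed.

Definition small_part t v := v \in [seq Mprod m i | i <- iota 0 t].

Lemma small_partP t v : reflect (exists2 i, i < t & v = Mprod m i) (small_part t v).
Proof.
apply: (iffP mapP) => [[i]|[i it ->]]; last by exists i; rewrite ?mem_iota.
by rewrite mem_iota; exists i.
Qed.

Lemma small_partS t v : small_part t.+1 v = small_part t v || (v == Mprod m t).
Proof. by rewrite /small_part -addn1 iotaD map_cat mem_cat mem_seq1. Qed.

Lemma npart_small_partS N s y : s.+1 < r -> 0 < y -> Mprod m s.+2 * y <= N.+1 ->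
  npart N (small_part s.+2) (Mprod m s.+2 * y - 1) =
  \sum_(a < m s.+2 * y) npart N (small_part s.+1) (Mprod m s.+1 * (m s.+2 * y - a) - 1).
Proof.
move=> sr y_gt0 My; rewrite MprodS -mulnA in My *.
set M := Mprod m s.+1; set Y := m s.+2 * y.
have M_gt0 : 0 < M by apply/Mprod_gt0/ltnW.
have Y_gt1 : 1 < Y by apply: leq_trans (leq_pmulr _ y_gt0); exact: m_ge2.
have MN : M < N.+1 by apply: leq_trans My; rewrite -[ltnLHS]muln1 ltn_pmul2l.
rewrite (@npart_split _ _ (Ordinal MN)) /=; last by rewrite small_partS eqxx orbT.
have YN : Y <= N.+1 by apply: leq_trans My; rewrite leq_pmull.
rewrite -(big_mkord xpredT (fun a => npart N (small_part s.+1) (M * (Y - a) - 1))).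
rewrite (big_nat_widen _ _ _ _ _ YN).
apply: eq_big => [a|a _].
  rewrite /= mulnC -ltnS subn1 prednK ?ltn_pmul2l //.
  by rewrite muln_gt0 M_gt0 ltnW.
rewrite subnAC [a * M]mulnC -mulnBr; apply: eq_npart => v.
rewrite small_partS; case: (boolP (small_part s.+1 v)) => /= [/small_partP[i ti ->]|_].
  by rewrite neq_ltn ltn_Mprod // ti ltnW.
by case: eqP.
Qed.

Lemma npart_small_part N s y : s < r -> 0 < y -> Mprod m s.+1 * y <= N.+1 ->
  npart N (small_part s.+1) (Mprod m s.+1 * y - 1) = pM_small m s y.
Proof.
elim: s y => [|s IH] y sr y_gt0 My.
  have m1y : 1 < Mprod m 1 * y.
    rewrite MprodS Mprod0 mul1n; apply: leq_trans (leq_pmulr _ y_gt0).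
    exact: m_ge2.
  have small1 v : small_part 1 v = (v == 1) by rewrite small_partS Mprod0.
  rewrite (@eq_npart N _ (pred1 1) _ (fun v => small1 v)) npart_ones; last by lia.
  by have -> : Mprod m 1 * y - 1 < N.+1 by lia.
rewrite npart_small_partS //= (reindex_inj rev_ord_inj) /=; apply: eq_bigr => a _.
have aY : a < m s.+2 * y := ltn_ord a.
have -> : m s.+2 * y - (m s.+2 * y - a.+1) = a.+1 by lia.
rewrite IH ?(ltnW sr) //; apply: leq_trans My.
by rewrite [Mprod m s.+2]MprodS -mulnA leq_pmul2l // Mprod_gt0 // ltnW // ltnW.
Qed.

Lemma small_part_Mpart K v :
  valid_idx K r -> small_part r v -> (0 < v) && is_Mpart m K v.
Proof.
move=> rK /small_partP[i ir ->]; have iM := ltn_idx_Mprod (ltnW ir).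
rewrite (leq_ltn_trans _ iM) //; apply/existsP.
exists (Ordinal (ltnW iM : i < (Mprod m i).+1)).
by rewrite /= (valid_idx_le (ltnW ir) rK) eqxx.
Qed.

End SmallParts.

Lemma is_Mpart_dvd m K r v : is_Mpart m K v -> ~~ small_part m r v -> Mprod m r %| v.
Proof.
case/existsP=> i /andP[_ /eqP <-].
case: (ltnP i r) => [ir|ri]; last by move=> _; apply: Mprod_dvd.
by case/negP; apply/small_partP; exists i.
Qed.

Theorem theorem1p3 (m : nat -> nat) (K : option nat)
  (hm0 : m 0 = 1)
  (hm : forall j, 1 <= j -> valid_idx K j -> 2 <= m j)
  (n r : nat) (hn : 0 < n) (hr : 0 < r) (hrK : valid_idx K r) :
  (\prod_(2 <= t < r.+1) calM (m t) t.-1)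
    %| pM m K ((\prod_(1 <= j < r.+1) m j) * n - 1).
Proof.
have m_ge2 j : 0 < j <= r -> 1 < m j.
  by case/andP=> j_gt0 jr; apply: hm j_gt0 (valid_idx_le jr hrK).
have Mr_gt0 : 0 < Mprod m r := Mprod_gt0 hm0 m_ge2 (leqnn r).
have -> : \prod_(2 <= t < r.+1) calM (m t) t.-1 = calM_prod m r.-1.
  by rewrite /calM_prod prednK.
rewrite prod_Mprod //; set N := Mprod m r * n - 1.
have NE : N.+1 = Mprod m r * n by rewrite /N subn1 prednK // muln_gt0 Mr_gt0.
change (calM_prod m r.-1 %|
        npart N (fun v => (0 < v) && is_Mpart m K v) (Mprod m r * n - 1)).
apply: (npart_dvd_multiples_of (S := small_part m r)) => //; last by rewrite NE.
- move=> y y_gt0 My; have rr : r.-1 < r by rewrite ltn_predL.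
  move: (npart_small_part (N := N) hm0 m_ge2 rr y_gt0).
  rewrite prednK // => /(_ My) ->.
  apply: calM_prod_dvd_pM_small => t; rewrite prednK // => /andP[t2 tr].
  by apply/ltnW/m_ge2; rewrite tr (ltnW t2).
- by move=> v; apply: small_part_Mpart.
- by move=> v /andP[v_gt0 Mv] small_v; rewrite v_gt0 (is_Mpart_dvd Mv small_v).
Qed.
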